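(* Let a group $G$ act on a set $X$, and suppose there are subsets $X_1,\dots,X_n\subseteq X$ and elements $h_1,\dots,h_n\in G$ such that, with $X_{n+1}:=X_1$, we have $h_iX_i\subseteq X_{i+1}$ for $1\le i\le n$ and $X=\bigcup_{i=1}^n\left(X_{i+1}\setminus h_iX_i\right)$. Then $G\curvearrowright X$ is paradoxical and $\tau(G\curvearrowright X)\le n+2$.
   Context: A paradoxical decomposition of $G\curvearrowright X$ consists of pairwise disjoint subsets $A_1,\dots,A_p,B_1,\dots,B_q$ of $X$ and elements $g_1,\dots,g_p,k_1,\dots,k_q\in G$ with $X=\bigcup_{i=1}^p g_iA_i=\bigcup_{j=1}^q k_jB_j$; the action is paradoxical if one exists. The Tarski number $\tau(G\curvearrowright X)$ is the minimal number of pieces $p+q$ in such a decomposition, and $\infty$ if none exists. *)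

From Stdlib Require Import Arith Lia.

Set Implicit Arguments.

Record group_action (X : Type) := GroupAction {
  ga_G : Type;
  ga_mul : ga_G -> ga_G -> ga_G;
  ga_one : ga_G;
  ga_inv : ga_G -> ga_G;
  ga_mulA : forall a b c, ga_mul a (ga_mul b c) = ga_mul (ga_mul a b) c;
  ga_mul1g : forall a, ga_mul ga_one a = a;
  ga_mulg1 : forall a, ga_mul a ga_one = a;
  ga_mulVg : forall a, ga_mul (ga_inv a) a = ga_one;
  ga_mulgV : forall a, ga_mul a (ga_inv a) = ga_one;
  ga_act : ga_G -> X -> X;
  ga_act1 : forall x, ga_act ga_one x = x;
  ga_actM : forall a b x, ga_act (ga_mul a b) x = ga_act a (ga_act b x)
}.

Definition img (X : Type) (A : group_action X) (g : ga_G A) (S : X -> Prop)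
  : X -> Prop := fun x => exists y, S y /\ x = ga_act A g y.

Definition disjoint (X : Type) (S T : X -> Prop) : Prop :=
  forall x, S x -> T x -> False.

Definition paradoxical_decomposition (X : Type) (A : group_action X)
  (p q : nat) (As Bs : nat -> X -> Prop) (gs ks : nat -> ga_G A) : Prop :=
  (forall i j, i < p -> j < p -> i <> j -> disjoint (As i) (As j)) /\
  (forall i j, i < q -> j < q -> i <> j -> disjoint (Bs i) (Bs j)) /\
  (forall i j, i < p -> j < q -> disjoint (As i) (Bs j)) /\
  (forall x, exists i, i < p /\ img A (gs i) (As i) x) /\
  (forall x, exists j, j < q /\ img A (ks j) (Bs j) x).

Definition paradoxical_with (X : Type) (A : group_action X) (p q : nat) : Prop :=
  exists As Bs gs ks, paradoxical_decomposition A p q As Bs gs ks.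

Definition paradoxical (X : Type) (A : group_action X) : Prop :=
  exists p q, paradoxical_with A p q.

(* tau(G acting on X) <= N, where tau is the minimal number p+q of pieces
   of a paradoxical decomposition (infinite if none exists). *)
Definition tarski_le (X : Type) (A : group_action X) (N : nat) : Prop :=
  exists p q, p + q <= N /\ paradoxical_with A p q.

From Stdlib Require Import Arith Lia Classical.

(* Write Y_i := X_{i+1} \ h_i X_i and let w_i := h_n ... h_{i+2} h_{i+1}, which
   carries X_{i+1} into X_{n+1} = X_1 along the chain.  The n pieces w_i Y_i lie in
   X_1, they are pairwise disjoint (if w_i y = w_j y' with i < j, then
   y' = h_j ... h_{i+1} y lies in h_j X_j, so not in Y_j), and translating them back
   by w_i^-1 covers X since the Y_i do.  Two further pieces h_n ... h_1 X_1 (also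
   disjoint from the w_i Y_i by the same argument) and X \ X_1 translate back to
   X_1 and X \ X_1, which cover X. *)

Section Action.

Context {X : Type} (A : group_action X).

Lemma act_invK (g : ga_G A) (x : X) : ga_act A (ga_inv A g) (ga_act A g x) = x.
Proof. now rewrite <- ga_actM, ga_mulVg, ga_act1. Qed.

Lemma act_inj (g : ga_G A) (x y : X) : ga_act A g x = ga_act A g y -> x = y.
Proof. intro E. now rewrite <- (act_invK g x), <- (act_invK g y), E. Qed.

Lemma img_one (S : X -> Prop) (x : X) : S x -> img A (ga_one A) S x.
Proof. intro Sx. exists x. now rewrite ga_act1. Qed.

Lemma img_inv_img (g : ga_G A) (S : X -> Prop) (x : X) :
  S x -> img A (ga_inv A g) (img A g S) x.
Proof.
  intro Sx. exists (ga_act A g x). split.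
  - now exists x.
  - now rewrite act_invK.
Qed.

End Action.

Section CyclicChain.

Context {X : Type} (A : group_action X) (n : nat).
Variables (Xs : nat -> X -> Prop) (hs : nat -> ga_G A).

Fixpoint hprod (m j : nat) : ga_G A :=
  match m with
  | 0 => ga_one A
  | S m' => ga_mul A (hs (j + m')) (hprod m' j)
  end.

Lemma hprod_add (a b j : nat) :
  hprod (a + b) j = ga_mul A (hprod a (j + b)) (hprod b j).
Proof.
  induction a as [|a IH]; simpl.
  - now rewrite ga_mul1g.
  - rewrite IH, ga_mulA. do 3 f_equal. lia.
Qed.

Definition hprod_tail (i : nat) : ga_G A := hprod (n - S i) (S i).

Definition hprod_full : ga_G A := hprod n 0.

Lemma hprod_tail_split (i j : nat) : i <= j < n ->
  hprod (n - i) i = ga_mul A (hprod_tail j) (ga_mul A (hs j) (hprod (j - i) i)).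
Proof.
  intro Hij. unfold hprod_tail.
  replace (n - i) with ((n - S j) + S (j - i)) by lia.
  rewrite hprod_add. simpl. do 3 f_equal; lia.
Qed.

Definition Ys (i : nat) (x : X) : Prop :=
  Xs (S i mod n) x /\ ~ img A (hs i) (Xs i) x.

Definition As (i : nat) : X -> Prop := img A (hprod_tail i) (Ys i).

Definition Bs (j : nat) : X -> Prop :=
  match j with
  | 0 => img A hprod_full (Xs 0)
  | _ => fun x => ~ Xs 0 x
  end.

Definition gs (i : nat) : ga_G A := ga_inv A (hprod_tail i).

Definition ks (j : nat) : ga_G A :=
  match j with
  | 0 => ga_inv A hprod_full
  | _ => ga_one A
  end.

Hypothesis Hsub : forall i, i < n -> forall x,
  img A (hs i) (Xs i) x -> Xs (S i mod n) x.

Lemma hprod_chain (m j : nat) (y : X) : j + m <= n ->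
  Xs (j mod n) y -> Xs ((j + m) mod n) (ga_act A (hprod m j) y).
Proof.
  induction m as [|m IH]; intros Hjm Hy; simpl.
  - now rewrite Nat.add_0_r, ga_act1.
  - rewrite ga_actM, Nat.add_succ_r.
    specialize (IH ltac:(lia) Hy). rewrite Nat.mod_small in IH by lia.
    apply Hsub; [lia|]. now exists (ga_act A (hprod m j) y).
Qed.

Lemma hprod_to_X0 (i : nat) (y : X) : i <= n ->
  Xs (i mod n) y -> Xs 0 (ga_act A (hprod (n - i) i) y).
Proof.
  intros Hi Hy. pose proof (hprod_chain (n - i) i y ltac:(lia) Hy) as Hc.
  now replace (i + (n - i)) with n in Hc by lia; rewrite Nat.Div0.mod_same in Hc.
Qed.

Lemma As_sub_X0 (i : nat) (x : X) : i < n -> As i x -> Xs 0 x.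
Proof. intros Hi [y [[Hy _] ->]]. now apply hprod_to_X0. Qed.

Lemma Bs0_sub_X0 (x : X) : Bs 0 x -> Xs 0 x.
Proof.
  intros [y [Hy ->]]. unfold hprod_full. rewrite <- (Nat.sub_0_r n) at 1.
  apply hprod_to_X0; [lia|]. now rewrite Nat.Div0.mod_0_l.
Qed.

Lemma hprod_tail_collision (i j : nat) (y z : X) : i <= j < n ->
  Xs (i mod n) y -> ga_act A (hprod_tail j) z = ga_act A (hprod (n - i) i) y ->
  img A (hs j) (Xs j) z.
Proof.
  intros Hij Hy E.
  rewrite (hprod_tail_split i j Hij), ga_actM in E. apply act_inj in E. subst z.
  exists (ga_act A (hprod (j - i) i) y). split; [|now rewrite ga_actM].
  pose proof (hprod_chain (j - i) i y ltac:(lia) Hy) as Hc.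
  now replace (i + (j - i)) with j in Hc by lia; rewrite Nat.mod_small in Hc by lia.
Qed.

Lemma As_disjoint (i j : nat) : i < n -> j < n -> i <> j -> disjoint (As i) (As j).
Proof.
  assert (Hlt : forall i j, i < j < n -> disjoint (As i) (As j)).
  { intros i' j' Hij x [y [[Hy _] ->]] [z [[_ Hz] E]].
    exact (Hz (hprod_tail_collision (S i') j' y z ltac:(lia) Hy (eq_sym E))). }
  intros Hi Hj Hne x Hx1 Hx2.
  destruct (Nat.lt_gt_cases i j) as [[L|L] _]; [exact Hne| |].
  - exact (Hlt i j ltac:(lia) x Hx1 Hx2).
  - exact (Hlt j i ltac:(lia) x Hx2 Hx1).
Qed.

Lemma Bs_disjoint (i j : nat) : i < 2 -> j < 2 -> i <> j -> disjoint (Bs i) (Bs j).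
Proof.
  intros Hi Hj Hne x Hx1 Hx2.
  destruct i as [|[|]], j as [|[|]]; try lia.
  - exact (Hx2 (Bs0_sub_X0 x Hx1)).
  - exact (Hx1 (Bs0_sub_X0 x Hx2)).
Qed.

Lemma As_Bs_disjoint (i j : nat) : i < n -> j < 2 -> disjoint (As i) (Bs j).
Proof.
  intros Hi Hj x Hx1 Hx2. destruct j as [|[|]]; try lia.
  - destruct Hx1 as [z [[_ Hz] E1]], Hx2 as [y [Hy E2]].
    apply Hz. rewrite E1 in E2.
    apply (hprod_tail_collision 0 i y z); [lia| |now rewrite Nat.sub_0_r].
    now rewrite Nat.Div0.mod_0_l.
  - exact (Hx2 (As_sub_X0 i x Hi Hx1)).
Qed.

Lemma As_cover (x : X) : (exists i, i < n /\ Ys i x) ->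
  exists i, i < n /\ img A (gs i) (As i) x.
Proof.
  intros [i [Hi Hx]]. exists i. split; [exact Hi|]. now apply img_inv_img.
Qed.

Lemma Bs_cover (x : X) : exists j, j < 2 /\ img A (ks j) (Bs j) x.
Proof.
  destruct (classic (Xs 0 x)) as [Hx|Hx].
  - exists 0. split; [lia|]. now apply img_inv_img.
  - exists 1. split; [lia|]. now apply img_one.
Qed.

End CyclicChain.

Theorem mainTheorem13 (X : Type) (A : group_action X) (n : nat)
  (Xs : nat -> X -> Prop) (hs : nat -> ga_G A)
  (Hsub : forall i, i < n -> forall x,
      img A (hs i) (Xs i) x -> Xs (S i mod n) x)
  (Hcov : forall x, exists i, i < n /\
      Xs (S i mod n) x /\ ~ img A (hs i) (Xs i) x) :
  paradoxical A /\ tarski_le A (n + 2).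
Proof.
  assert (Hdec : paradoxical_with A n 2).
  { exists (As A n Xs hs), (Bs A n Xs hs), (gs A n hs), (ks A n hs).
    repeat split.
    - now apply As_disjoint.
    - now apply Bs_disjoint.
    - now apply As_Bs_disjoint.
    - intro x. apply As_cover, Hcov.
    - apply Bs_cover. }
  split.
  - now exists n, 2.
  - exists n, 2. split; [lia | exact Hdec].
Qed.
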